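(* Let $R$ be a multiplication ring with finitely many minimal prime ideals. Then an $R$-module $M$ is faithful, Noetherian and distributive if and only if $M$ is a faithful multiplication $R$-module.
   Context: All rings are commutative with $1$ and all modules are unital. A ring $R$ is a multiplication ring if whenever $I,J$ are ideals of $R$ with $J\subseteq I$, there is an ideal $I'$ of $R$ with $J=I'I$. An $R$-module $M$ is a multiplication module if every submodule of $M$ equals $IM$ for some ideal $I$ of $R$. A submodule $N$ of $M$ is distributive if $(M_1+M_2)\cap N=M_1\cap N+M_2\cap N$ for all submodules $M_1,M_2$ of $M$; $M$ is distributive if all its submodules are distributive. $M$ is faithful if $\mathrm{ann}_R(M)=0$. *)

From HB Require Import structures.
From mathcomp Require Import all_boot all_order all_algebra.
Set Implicit Arguments. Unset Strict Implicit. Unset Printing Implicit Defensive.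
Import GRing.Theory.
Local Open Scope ring_scope.

Section Defs.
Variable R : comPzRingType.

Definition is_ideal (I : R -> Prop) : Prop :=
  I 0 /\ (forall a b, I a -> I b -> I (a + b)) /\ (forall r a, I a -> I (r * a)).

Definition same {T : Type} (A B : T -> Prop) : Prop := forall x, A x <-> B x.
Definition incl {T : Type} (A B : T -> Prop) : Prop := forall x, A x -> B x.

Definition ideal_mul (I J : R -> Prop) : R -> Prop := fun x =>
  exists s : seq (R * R), (forall p, p \in s -> I p.1 /\ J p.2) /\
    x = \sum_(p <- s) p.1 * p.2.

Definition multiplication_ring : Prop :=
  forall I J, is_ideal I -> is_ideal J -> incl J I ->
    exists I', is_ideal I' /\ same J (ideal_mul I' I).

Definition prime_ideal (P : R -> Prop) : Prop :=
  is_ideal P /\ ~ P 1 /\ (forall a b, P (a * b) -> P a \/ P b).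

Definition minimal_prime (P : R -> Prop) : Prop :=
  prime_ideal P /\ (forall Q, prime_ideal Q -> incl Q P -> incl P Q).

Definition finitely_many_minimal_primes : Prop :=
  exists (n : nat) (Q : nat -> R -> Prop),
    forall P, minimal_prime P -> exists2 i, (i < n)%N & same P (Q i).

Variable M : lmodType R.

Definition is_submod (N : M -> Prop) : Prop :=
  N 0 /\ (forall a b, N a -> N b -> N (a + b)) /\ (forall r m, N m -> N (r *: m)).

Definition ideal_smul (I : R -> Prop) : M -> Prop := fun x =>
  exists s : seq (R * M), (forall p, p \in s -> I p.1) /\
    x = \sum_(p <- s) p.1 *: p.2.

Definition multiplication_module : Prop :=
  forall N, is_submod N -> exists I, is_ideal I /\ same N (ideal_smul I).

Definition faithful_mod : Prop := forall r : R, (forall m : M, r *: m = 0) -> r = 0.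

Definition noetherian_mod : Prop :=
  forall N : nat -> M -> Prop, (forall n, is_submod (N n)) ->
    (forall n, incl (N n) (N n.+1)) ->
    exists k, forall n, (k <= n)%N -> same (N n) (N k).

Definition sum_sub (A B : M -> Prop) : M -> Prop :=
  fun x => exists a b, A a /\ B b /\ x = a + b.
Definition cap_sub (A B : M -> Prop) : M -> Prop := fun x => A x /\ B x.

Definition distributive_submod (N : M -> Prop) : Prop :=
  forall M1 M2, is_submod M1 -> is_submod M2 ->
    same (cap_sub (sum_sub M1 M2) N) (sum_sub (cap_sub M1 N) (cap_sub M2 N)).

Definition distributive_mod : Prop :=
  forall N, is_submod N -> distributive_submod N.
End Defs.

(* Over any commutative ring, M is distributive iff (Rx : y) + (Ry : x) = R for all
   x, y in M. When M is finitely generated this yields a partition of unity 1 = sum e_i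
   with every e_i M cyclic, and then each submodule N equals (N : M) M. Conversely a
   multiplication ring is arithmetical, a multiplication module over an arithmetical
   ring has the colon property above, and since N = (N : M) M it is Noetherian as soon
   as R is.
   The heart of the matter is that a multiplication ring R with finitely many minimal
   primes is Noetherian. An ideal J is finitely generated modulo each prime, hence, by
   the Chinese remainder argument available in arithmetical rings, modulo the
   nilradical (the finite intersection of the minimal primes). For J inside the
   nilradical we show that locally at each maximal ideal m some s outside m maps J into
   a finitely generated subideal of J: if Q0 is the minimal prime below m, a power of
   an element x outside m lying in all other minimal primes vanishes locally at the
   maximal ideals not above Q0, while at those above Q0 the ideal J, contained in Q0,
   is locally zero, except at Q0 itself if Q0 is maximal, where J is locally principal
   because the localisation is a chain ring with principal maximal ideal. *)

From mathcomp Require Import all_boot all_order all_algebra.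
From mathcomp Require Import ring.
From mathcomp Require classical_sets boolp.
From Stdlib Require Import Classical ClassicalEpsilon.
Set Implicit Arguments. Unset Strict Implicit. Unset Printing Implicit Defensive.
Import GRing.Theory.
Local Open Scope ring_scope.

Lemma same_eq (T : Type) (A B : T -> Prop) : same A B -> A = B.
Proof. by move=> AB; apply: boolp.funext => x; apply: boolp.propext. Qed.

(* Zorn's lemma for predicates containing a fixed nonempty [A0]; the point [x0]
   separates the candidates from the empty union of the empty chain. *)
Lemma zorn_above (T : Type) (P : (T -> Prop) -> Prop) (A0 : T -> Prop) (x0 : T) :
  A0 x0 -> P A0 ->
  (forall F : (T -> Prop) -> Prop, (forall A, F A -> P A /\ incl A0 A) ->
     (exists A, F A) -> (forall A B, F A -> F B -> incl A B \/ incl B A) ->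
     P (fun x => exists2 A, F A & A x)) ->
  exists A, [/\ P A, incl A0 A & forall B, P B -> incl A B -> incl B A].
Proof.
move=> A0x0 PA0 Pchain.
pose P' A := (forall x, ~ A x) \/ (P A /\ incl A0 A).
have [A [P'A Amax]] : exists A, P' A /\ forall B, classical_sets.proper A B -> ~ P' B.
  apply: classical_sets.Zorn_bigcup => F FP Ftot.
  case: (classic (exists A, F A /\ exists x, A x)) => [[A [FA [x Ax]]]|Fempty]; last first.
    by left=> y [X FX Xy]; apply: Fempty; exists X; split => //; exists y.
  right; pose F' A := F A /\ exists x, A x.
  have F'P B : F' B -> P B /\ incl A0 B.
    by move=> [/FP [Bempty|//] [y By]]; case: (Bempty y).
  have -> : classical_sets.bigcup F id = (fun x => exists2 A, F' A & A x).
    apply: same_eq => y; split => [[X FX Xy]|[X [FX _] Xy]]; last by exists X.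
    by exists X => //; split => //; exists y.
  split.
    apply: Pchain => //; first by exists A; split => //; exists x.
    by move=> B C [FB _] [FC _]; exact: Ftot.
  have F'A : F' A by split => //; exists x.
  by move=> y A0y; exists A => //; exact: (proj2 (F'P A F'A)).
exists A; case: P'A => [Aempty | [PA A0A]].
  exfalso; apply: (Amax A0); last by rewrite /P'; right; split => // x.
  by split => [x /Aempty [] | /(_ x0 A0x0) /Aempty].
split => // B PB AB x Bx; apply: NNPP => Ax.
by apply: (Amax B); [split => // /(_ x Bx) | rewrite /P'; right; split => // y /A0A /AB].
Qed.

Lemma sum_closed (V : nmodType) (P : V -> Prop) (I : eqType) (s : seq I) (F : I -> V) :
  P 0 -> (forall a b, P a -> P b -> P (a + b)) ->
  (forall i, i \in s -> P (F i)) -> P (\sum_(i <- s) F i).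
Proof. by move=> P0 PD PF; rewrite big_seq; apply: big_ind. Qed.

Section IdealFacts.
Variables (R : comPzRingType) (I : R -> Prop).
Hypothesis idI : is_ideal I.

Lemma ideal0 : I 0. Proof. by case: idI. Qed.

Lemma idealD x y : I x -> I y -> I (x + y).
Proof. by case: idI => _ [D _]; apply: D. Qed.

Lemma idealMl r x : I x -> I (r * x).
Proof. by case: idI => _ [_ Ml]; apply: Ml. Qed.

Lemma idealMr r x : I x -> I (x * r).
Proof. by rewrite mulrC; apply: idealMl. Qed.

Lemma idealB x y : I x -> I y -> I (x - y).
Proof. by move=> Ix Iy; rewrite -mulN1r; apply/idealD/idealMl. Qed.

Lemma ideal_notin1B p : ~ I 1 -> I p -> ~ I (1 - p).
Proof. by move=> I1 Ip I1p; apply: I1; rewrite -(subrKC p 1); apply: idealD. Qed.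

End IdealFacts.

Section Arithmetical.
Variable R : comPzRingType.

Definition princ (a : R) : R -> Prop := fun z => exists r, z = r * a.

Lemma princ_ideal a : is_ideal (princ a).
Proof.
split; first by exists 0; rewrite mul0r.
split; first by move=> x y [u ->] [v ->]; exists (u + v); rewrite mulrDl.
by move=> r x [u ->]; exists (r * u); rewrite mulrA.
Qed.

Lemma princ_self a : princ a a. Proof. by exists 1; rewrite mul1r. Qed.

Lemma zero_ideal : is_ideal (fun z : R => z = 0).
Proof.
split => //; split; first by move=> a b -> ->; rewrite addr0.
by move=> r a ->; rewrite mulr0.
Qed.

(* [(a) : (b)] + [(b) : (a)] = R, i.e. R is a distributive module over itself *)
Definition arithmetical : Prop :=
  forall a b : R, exists p, princ a (p * b) /\ princ b ((1 - p) * a).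

Hypothesis arith : arithmetical.

Lemma arithmetical_split1 (A B : R -> Prop) a (bs : seq R) :
  is_ideal A -> is_ideal B -> A a -> (forall b, b \in bs -> B b) ->
  exists t, (forall b, b \in bs -> A (t * b)) /\ B ((1 - t) * a).
Proof.
move=> idA idB Aa; elim: bs => [|b bs IH] Bbs.
  by exists 1; split => //; rewrite subrr mul0r; apply: ideal0.
have [t [Abs Ba]] : exists t, (forall b, b \in bs -> A (t * b)) /\ B ((1 - t) * a).
  by apply: IH => x xbs; apply: Bbs; rewrite inE xbs orbT.
have [p [[u Hu] [v Hv]]] := arith a b.
exists (p * t); split.
  move=> x; rewrite in_cons => /orP [/eqP -> | xbs]; last first.
    by rewrite -mulrA; apply: (idealMl idA); exact: Abs.
  by rewrite mulrAC Hu; apply: (idealMr idA); exact: idealMl.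
have -> : (1 - p * t) * a = (1 - p) * a + p * ((1 - t) * a) by ring.
rewrite Hv; apply: (idealD idB); last exact: idealMl.
by apply: (idealMl idB); apply: Bbs; rewrite mem_head.
Qed.

Lemma arithmetical_split (A B : R -> Prop) (sa sb : seq R) :
  is_ideal A -> is_ideal B ->
  (forall a, a \in sa -> A a) -> (forall b, b \in sb -> B b) ->
  exists t, (forall b, b \in sb -> A (t * b)) /\ (forall a, a \in sa -> B ((1 - t) * a)).
Proof.
move=> idA idB; elim: sa => [|a sa IH] Asa Bsb.
  by exists 0; split => // b _; rewrite mul0r; apply: ideal0.
have [t [Asb Bsa]] : exists t, (forall b, b \in sb -> A (t * b)) /\
    (forall a, a \in sa -> B ((1 - t) * a)).
  by apply: IH => // x xsa; apply: Asa; rewrite inE xsa orbT.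
have [s [Asb' Ba]] := arithmetical_split1 idA idB (Asa a (mem_head _ _)) Bsb.
exists (s + (1 - s) * t); split.
  move=> b bsb; rewrite mulrDl -mulrA.
  by apply: (idealD idA); [exact: Asb' | apply: (idealMl idA); exact: Asb].
have -> : 1 - (s + (1 - s) * t) = (1 - s) * (1 - t) by ring.
move=> x; rewrite in_cons => /orP [/eqP -> | xsa]; last first.
  by rewrite -mulrA; apply: (idealMl idB); exact: Bsa.
by rewrite mulrAC; apply: (idealMr idB).
Qed.

End Arithmetical.

Section Module.
Variables (R : comPzRingType) (M : lmodType R).

Definition cyc (x : M) : M -> Prop := fun z => exists r : R, z = r *: x.

Lemma cyc_submod x : is_submod (cyc x).
Proof.
split; first by exists 0; rewrite scale0r.
split; first by move=> a b [r ->] [s ->]; exists (r + s); rewrite scalerDl.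
by move=> r m [s ->]; exists (r * s); rewrite scalerA.
Qed.

Lemma cyc_self x : cyc x x. Proof. by exists 1; rewrite scale1r. Qed.

Fixpoint span (l : seq M) : M -> Prop :=
  match l with
  | [::] => fun m => m = 0
  | x :: l' => fun m => exists r : R, span l' (m - r *: x)
  end.

Lemma span_submod l : is_submod (span l).
Proof.
elim: l => [|x l [S0 [SD SZ]]] /=.
  split => //; split; first by move=> a b -> ->; rewrite addr0.
  by move=> r m ->; rewrite scaler0.
split; first by exists 0; rewrite scale0r subr0.
split.
  move=> a b [r Sa] [s Sb]; exists (r + s).
  by rewrite scalerDl opprD addrACA; apply: SD.
by move=> r m [s Sm]; exists (r * s); rewrite -scalerA -scalerBr; apply: SZ.
Qed.

Lemma span_cons l y m : span l m -> span (y :: l) m.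
Proof. by move=> Sm; exists 0; rewrite scale0r subr0. Qed.

Lemma span_head l y : span (y :: l) y.
Proof. by exists 1; rewrite scale1r subrr; case: (span_submod l). Qed.

Lemma span_catl l1 l2 m : span l1 m -> span (l1 ++ l2) m.
Proof.
elim: l1 m => [|x l1 IH] m /=; last by move=> [r Sm]; exists r; apply: IH.
by move=> ->; elim: l2 => //= y l2 IH2; exists 0; rewrite scale0r subr0.
Qed.

Lemma span_catr l1 l2 m : span l2 m -> span (l1 ++ l2) m.
Proof. by elim: l1 => //= x l1 IH Sm; exists 0; rewrite scale0r subr0; apply: IH. Qed.

Lemma span_min (N : M -> Prop) l : is_submod N -> (forall x, x \in l -> N x) ->
  incl (span l) N.
Proof.
move=> [N0 [ND NZ]]; elim: l => [|x l IH] Nl m /=; first by move=> ->.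
move=> [r Sm]; rewrite -(subrK (r *: x) m); apply: ND.
  by apply: IH => // y yl; apply: Nl; rewrite inE yl orbT.
by apply: NZ; apply: Nl; rewrite mem_head.
Qed.

Lemma fg_noetherian :
  (forall N, is_submod N -> exists l, (forall x, x \in l -> N x) /\ incl N (span l)) ->
  noetherian_mod M.
Proof.
move=> fg N subN incN.
have mono k n : (k <= n)%N -> incl (N k) (N n).
  elim: n => [|n IH]; first by rewrite leqn0 => /eqP ->.
  by rewrite leq_eqVlt => /orP [/eqP -> // | kn] m /(IH kn); apply: incN.
pose U m := exists k, N k m.
have subU : is_submod U.
  split; first by exists 0%N; case: (subN 0%N).
  split; last by move=> r m [k Nm]; exists k; case: (subN k) => _ [_]; apply.
  move=> a b [i Na] [j Nb]; exists (maxn i j); case: (subN (maxn i j)) => _ [ND _].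
  by apply: ND; [apply: (mono i) | apply: (mono j)]; rewrite ?leq_maxl ?leq_maxr.
have [l [Ul UL]] := fg U subU.
have [k Nkl] : exists k, forall x, x \in l -> N k x.
  elim: l Ul {UL} => [|y l IH] Ul; first by exists 0%N.
  have [k Nk] : exists k, forall x, x \in l -> N k x.
    by apply: IH => x xl; apply: Ul; rewrite inE xl orbT.
  have [j Nj] := Ul y (mem_head _ _).
  exists (maxn k j) => x; rewrite inE => /orP [/eqP -> | xl].
    by apply: (mono j); rewrite ?leq_maxr.
  by apply: (mono k); rewrite ?leq_maxl //; apply: Nk.
exists k => n kn m; split; last exact: mono.
by move=> Nm; apply: (span_min (subN k) Nkl); apply: UL; exists n.
Qed.

Lemma noetherian_fg : noetherian_mod M -> exists l, forall m : M, span l m.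
Proof.
move=> noeth; apply: NNPP => notfg.
have grow l : {m | ~ span l m}.
  apply: constructive_indefinite_description.
  by apply: not_all_ex_not => Sl; apply: notfg; exists l.
pose fix chain n : seq M := if n is n'.+1 then sval (grow (chain n')) :: chain n' else [::].
have [k Hk] := noeth (fun n => span (chain n)) (fun n => span_submod (chain n))
  (fun n m => span_cons (sval (grow (chain n))) (m := m)).
have := proj1 (Hk k.+1 (leqnSn k) _) (span_head _ _).
by case: (grow (chain k)).
Qed.

Definition colon (N : M -> Prop) : R -> Prop := fun r => forall m, N (r *: m).

Lemma colon_ideal N : is_submod N -> is_ideal (colon N).
Proof.
move=> [N0 [ND NZ]]; split; first by move=> m; rewrite scale0r.
split; first by move=> a b Na Nb m; rewrite scalerDl; apply: ND.
by move=> r a Na m; rewrite -scalerA; apply: NZ.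
Qed.

Lemma ideal_smul0 (I : R -> Prop) : @ideal_smul R M I 0.
Proof. by exists [::]; rewrite big_nil. Qed.

Lemma ideal_smulD (I : R -> Prop) a b :
  ideal_smul I a -> ideal_smul I b -> @ideal_smul R M I (a + b).
Proof.
move=> [s [Is ->]] [t [It ->]]; exists (s ++ t); rewrite big_cat; split => // p.
by rewrite mem_cat => /orP [/Is | /It].
Qed.

Lemma ideal_smulZ (I : R -> Prop) r (m : M) : I r -> ideal_smul I (r *: m).
Proof.
move=> Ir; exists [:: (r, m)]; rewrite big_seq1; split => // p.
by rewrite mem_seq1 => /eqP ->.
Qed.

Lemma ideal_smul_min N (I : R -> Prop) : is_submod N -> incl I (colon N) ->
  incl (@ideal_smul R M I) N.
Proof.
move=> [N0 [ND _]] IN m [s [Is ->]].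
by apply: sum_closed => // p /Is /IN.
Qed.

Lemma mult_mod_colon N : multiplication_module M -> is_submod N ->
  same N (ideal_smul (colon N)).
Proof.
move=> multM subN m; have [I [_ NI]] := multM N subN.
have IN : incl I (colon N) by move=> r Ir m'; apply/NI; apply: ideal_smulZ.
split; last exact: ideal_smul_min.
by move=> /NI [s [Is ->]]; exists s; split => // p /Is /IN.
Qed.

Lemma mult_noetherian : noetherian_mod R^o -> multiplication_module M -> noetherian_mod M.
Proof.
move=> noethR multM N subN incN.
have [k Hk] := noethR (fun n => colon (N n)) (fun n => colon_ideal (subN n))
  (fun n r Nr m => incN n _ (Nr m)).
exists k => n kn m; rewrite (mult_mod_colon multM (subN n) m).
rewrite (mult_mod_colon multM (subN k) m).
by split; move=> [s [Is ->]]; exists s; split => // p /Is /(Hk n kn).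
Qed.

(* (Rx : y) + (Ry : x) = R for all x, y *)
Definition colon_comaximal : Prop :=
  forall x y : M, exists a b : R, [/\ a + b = 1, cyc x (a *: y) & cyc y (b *: x)].

Lemma distributive_colon_comaximal : distributive_mod M -> colon_comaximal.
Proof.
move=> distrM x y.
(* distributivity splits y, an element of (Rx + R(y - x)) /\ Ry *)
have [Ey _] := distrM (cyc y) (cyc_submod y) (cyc x) (cyc (y - x))
  (cyc_submod x) (cyc_submod (y - x)) y.
have [u [v [[[r Eu] _] [[[s Ev] [t Ev']] Euv]]]] : sum_sub
    (cap_sub (cyc x) (cyc y)) (cap_sub (cyc (y - x)) (cyc y)) y.
  apply: Ey; split; last exact: cyc_self.
  by exists x, (y - x); rewrite subrKC; split; [exact: cyc_self | split => //; exact: cyc_self].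
exists (1 - s), s; split; first by rewrite subrK.
  exists (r - s); rewrite scalerBl scale1r {1}Euv Eu Ev scalerBr scalerBl.
  by rewrite [in LHS]addrCA [LHS]addrC addKr.
by exists (s - t); rewrite scalerBl -Ev' Ev scalerBr opprB addrC subrK.
Qed.

Lemma colon_comaximal_distributive : colon_comaximal -> distributive_mod M.
Proof.
move=> ccM N [_ [ND NZ]] M1 M2 [_ [M1D M1Z]] [_ [M2D M2Z]] m; split.
  move=> [[a [b [M1a [M2b ->]]]] Nab].
  have [s [t [st1 [r Hr] [r' Hr']]]] := ccM a b.
  exists (s *: (a + b)), (t *: (a + b)); split; last split.
  - by split; [rewrite scalerDr Hr; apply: M1D; apply: M1Z | exact: NZ].
  - by split; [rewrite scalerDr Hr'; apply: M2D; apply: M2Z | exact: NZ].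
  - by rewrite -scalerDl st1 scale1r.
move=> [u [v [[M1u Nu] [[M2v Nv] ->]]]]; split; last exact: ND.
by exists u, v.
Qed.

Lemma mult_colon_comaximal : arithmetical R -> multiplication_module M -> colon_comaximal.
Proof.
move=> arith multM x y.
have [s [Is Ex]] := proj1 (mult_mod_colon multM (cyc_submod x) x) (cyc_self x).
have [s' [Is' Ey]] := proj1 (mult_mod_colon multM (cyc_submod y) y) (cyc_self y).
have Isx a : a \in map fst s -> colon (cyc x) a by move=> /mapP [p ps ->]; apply: Is.
have Isy b : b \in map fst s' -> colon (cyc y) b by move=> /mapP [p ps ->]; apply: Is'.
have [t [Ht Ht']] := arithmetical_split arith
  (colon_ideal (cyc_submod x)) (colon_ideal (cyc_submod y)) Isx Isy.
exists t, (1 - t); split; first by rewrite addrC subrK.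
  rewrite Ey scaler_sumr; apply: sum_closed; try by case: (cyc_submod x) => [? []].
  by move=> p ps; rewrite scalerA; apply: Ht; apply: map_f.
rewrite Ex scaler_sumr; apply: sum_closed; try by case: (cyc_submod y) => [? []].
by move=> p ps; rewrite scalerA; apply: Ht'; apply: map_f.
Qed.

Definition cyclic_on (l : seq M) (e : R) (x : M) :=
  span l x /\ forall m, span l m -> cyc x (e *: m).

Section PartitionOfUnity.
Hypothesis ccM : colon_comaximal.

Lemma cyclic_on_cons y l (qs : seq (R * M)) :
  (forall p, p \in qs -> cyclic_on l p.1 p.2) ->
  exists (qs' : seq (R * M)) (f : R),
   [/\ \sum_(p <- qs') p.1 + f = \sum_(p <- qs) p.1,
       forall p, p \in qs' -> cyclic_on (y :: l) p.1 p.2 &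
       forall m, span (y :: l) m -> cyc y (f *: m)].
Proof.
elim: qs => [|[e x] qs IH] cyc_qs.
  exists [::], 0; split; first by rewrite !big_nil addr0.
    by [].
  by move=> m _; exists 0; rewrite !scale0r.
have [qs' [f [sum_qs' cyc_qs' cyc_f]]] :
    exists (qs' : seq (R * M)) (f : R),
   [/\ \sum_(p <- qs') p.1 + f = \sum_(p <- qs) p.1,
       forall p, p \in qs' -> cyclic_on (y :: l) p.1 p.2 &
       forall m, span (y :: l) m -> cyc y (f *: m)].
  by apply: IH => p pqs; apply: cyc_qs; rewrite inE pqs orbT.
have [lx ex] : cyclic_on l e x by apply: (cyc_qs (e, x)); rewrite mem_head.
have [a [b [ab1 [c Hc] [c' Hc']]]] := ccM x y.
have [_ [CxD CxZ]] := cyc_submod x.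
have [_ [CyD CyZ]] := cyc_submod y.
exists ((e * a, x) :: qs'), (f + e * b); split.
- rewrite !big_cons /= -sum_qs' -[in RHS](mulr1 e) -ab1.
  by move: (\sum_(p <- qs') p.1) => S; ring.
- move=> p; rewrite inE => /orP [/eqP -> /= | /cyc_qs' //].
  split; first exact: span_cons.
  move=> m [r lm]; rewrite -(subrK (r *: y) m) scalerDr; apply: (CxD).
    by rewrite mulrC -scalerA; apply: (CxZ); apply: ex.
  rewrite scalerA mulrAC -scalerA Hc scalerA.
  have -> : e * r * c = r * c * e by ring.
  by rewrite -scalerA; apply: (CxZ); exact: ex.
- move=> m lm; rewrite scalerDl; apply: (CyD); first exact: cyc_f.
  case: lm => r lm; rewrite -(subrK (r *: y) m) scalerDr; apply: (CyD).
    have [d Hd] := ex _ lm.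
    rewrite mulrC -scalerA Hd scalerA mulrC -scalerA Hc'.
    by apply: (CyZ); apply: (CyZ); exact: cyc_self.
  by exists (e * b * r); rewrite scalerA.
Qed.

Lemma partition_of_unity l : exists ps : seq (R * M),
  \sum_(p <- ps) p.1 = 1 /\ forall p, p \in ps -> cyclic_on l p.1 p.2.
Proof.
elim: l => [|y l [ps [sum_ps cyc_ps]]].
  exists [:: (1, 0)]; rewrite big_seq1; split => // p; rewrite mem_seq1 => /eqP -> /=.
  by split => // m ->; exists 0; rewrite !scaler0.
have [qs' [f [sum_qs' cyc_qs' cyc_f]]] := cyclic_on_cons y cyc_ps.
exists ((f, y) :: qs'); rewrite big_cons /= addrC sum_qs'; split => // p.
by rewrite inE => /orP [/eqP -> | /cyc_qs' //]; split; [exact: span_head | exact: cyc_f].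
Qed.

Lemma fg_colon_comaximal_mult : (exists l, forall m, span l m) -> multiplication_module M.
Proof.
move=> [l fgM] N subN; have [_ [ND NZ]] := subN.
exists (colon N); split; first exact: colon_ideal.
move=> m; split; last exact: ideal_smul_min.
move=> Nm; have [ps [sum_ps cyc_ps]] := partition_of_unity l.
rewrite -[m]scale1r -sum_ps scaler_suml.
apply: sum_closed; [exact: ideal_smul0 | exact: ideal_smulD |].
move=> [e x] /cyc_ps [_ ex] /=.
have [c [d [cd1 [c1 Hc] [t Ht]]]] := ccM m x.
have -> : e *: m = (c * e) *: m + (e * t) *: x.
  by rewrite -[(e * t) *: x]scalerA -Ht scalerA -scalerDl mulrC -mulrDr cd1 mulr1.
apply: ideal_smulD; apply: ideal_smulZ => m'; have [r Hr] := ex m' (fgM m').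
  by rewrite -scalerA Hr scalerA mulrC -scalerA Hc scalerA; apply: NZ.
by rewrite mulrC -scalerA Hr scalerA mulrC -scalerA -Ht scalerA; apply: NZ.
Qed.

End PartitionOfUnity.
End Module.

(* [z] lies in [A] after localising at the prime [P] *)
Definition loc_mem (R : comPzRingType) (P A : R -> Prop) (z : R) :=
  exists2 s, ~ P s & A (s * z).
Notation loc_zero P z := (loc_mem P (fun r => r = 0) z).

Section Primes.
Variable R : comPzRingType.
Implicit Types (A I P S m : R -> Prop).

Lemma prime_notinM P a b : prime_ideal P -> ~ P a -> ~ P b -> ~ P (a * b).
Proof. by move=> [_ [_ PM]] Pa Pb /PM []. Qed.

Lemma prime_notinX P x k : prime_ideal P -> ~ P x -> ~ P (x ^+ k).
Proof.
move=> primeP Px; elim: k => [|k IH]; first by rewrite expr0; case: primeP => _ [].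
by rewrite exprS; apply: prime_notinM.
Qed.

Lemma prime_of_avoiding A S : is_ideal A -> (forall z, A z -> ~ S z) ->
  S 1 -> (forall a b, S a -> S b -> S (a * b)) ->
  (forall x, ~ A x -> exists r y, A y /\ S (r * x + y)) -> prime_ideal A.
Proof.
move=> idA AS S1 SM Agen; split=> //; split; first by move/AS.
move=> a b Aab; apply: NNPP => /not_or_and [/Agen [r [y [Ay Sa]]] /Agen [r' [y' [Ay' Sb]]]].
apply: (AS _ _ (SM _ _ Sa Sb)).
have -> : (r * a + y) * (r' * b + y') = r * r' * (a * b) + (y * (r' * b + y') + r * a * y').
  by ring.
apply: (idealD idA); first exact: idealMl.
by apply: (idealD idA); [exact: idealMr | exact: idealMl].
Qed.

Lemma exists_ideal_max_avoiding I S : is_ideal I -> (forall z, I z -> ~ S z) ->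
  exists A, [/\ is_ideal A, incl I A, (forall z, A z -> ~ S z) &
    forall x, ~ A x -> exists r y, A y /\ S (r * x + y)].
Proof.
move=> idI IS.
have [|A [[idA AS] IA Amax]] := @zorn_above R
  (fun A => is_ideal A /\ forall z, A z -> ~ S z) I 0 (ideal0 idI) (conj idI IS).
  move=> F FP [A0 FA0] Ftot; split; last first.
    by move=> z [A FA Az]; case: (FP A FA) => [[_ AS] _]; apply: AS.
  have idF A : F A -> is_ideal A by case/FP => [[]].
  split; first by exists A0 => //; apply: ideal0; exact: idF.
  split; last by move=> r a [A FA Aa]; exists A => //; apply: (idealMl (idF A FA)).
  move=> a b [A FA Aa] [B FB Bb].
  case: (Ftot A B FA FB) => [AB | BA].
    by exists B => //; apply: (idealD (idF B FB)) => //; apply: AB.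
  by exists A => //; apply: (idealD (idF A FA)) => //; apply: BA.
exists A; split=> // x Ax; apply: NNPP => Agen.
pose B z := exists r y, A y /\ z = r * x + y.
have idB : is_ideal B.
  split; first by exists 0, 0; split; [exact: ideal0 | rewrite mul0r addr0].
  split.
    move=> a b [r [y [Ay ->]]] [r' [y' [Ay' ->]]]; exists (r + r'), (y + y').
    by split; [exact: idealD | ring].
  move=> c a [r [y [Ay ->]]]; exists (c * r), (c * y).
  by split; [exact: idealMl | ring].
apply: Ax; apply: (Amax B).
- by split=> // z [r [y [Ay ->]]] Sz; apply: Agen; exists r, y.
- by move=> z Az; exists 0, z; split => //; rewrite mul0r add0r.
- by exists 1, 0; split; [exact: ideal0 | rewrite mul1r addr0].
Qed.

Definition maximal_ideal (m : R -> Prop) :=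
  [/\ is_ideal m, ~ m 1 & forall x, ~ m x -> exists r y, m y /\ r * x + y = 1].

Lemma maximal_prime m : maximal_ideal m -> prime_ideal m.
Proof.
move=> [idm m1 mgen]; apply: (prime_of_avoiding (S := fun z => z = 1)) => //.
- by move=> z mz z1; apply: m1; rewrite -z1.
- by move=> a b -> ->; rewrite mulr1.
Qed.

Lemma maximal_max m I : maximal_ideal m -> is_ideal I -> ~ I 1 -> incl m I -> incl I m.
Proof.
move=> [_ _ mgen] idI I1 mI z Iz; apply: NNPP => /mgen [r [y [my Ey]]].
by apply: I1; rewrite -Ey; apply: (idealD idI); [apply: idealMl | apply: mI].
Qed.

Lemma exists_maximal_above I : is_ideal I -> ~ I 1 ->
  exists m, maximal_ideal m /\ incl I m.
Proof.
move=> idI I1.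
have [|A [idA IA A1 Agen]] := @exists_ideal_max_avoiding I (fun z => z = 1) idI.
  by move=> z Iz z1; apply: I1; rewrite -z1.
by exists A; split=> //; split=> // /A1; apply.
Qed.

Lemma exists_prime_avoiding I S : is_ideal I -> (forall z, I z -> ~ S z) ->
  S 1 -> (forall a b, S a -> S b -> S (a * b)) ->
  exists P, [/\ prime_ideal P, incl I P & forall z, P z -> ~ S z].
Proof.
move=> idI IS S1 SM; have [A [idA IA AS Agen]] := exists_ideal_max_avoiding idI IS.
by exists A; split=> //; exact: (prime_of_avoiding idA AS S1 SM Agen).
Qed.

Lemma exists_minimal_prime_below P : prime_ideal P ->
  exists Q, minimal_prime Q /\ incl Q P.
Proof.
move=> primeP; have P1 : ~ P 1 by case: primeP => _ [].
pose coprime C := prime_ideal (fun z => ~ C z) /\ forall z, ~ C z -> P z.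
have coprimeP : coprime (fun z => ~ P z).
  split=> [|z /NNPP //]; suff -> : (fun z => ~ ~ P z) = P by [].
  by apply: same_eq => z; split=> [/NNPP | Pz []].
have [|A [[primeA AP] PA Amax]] := @zorn_above R coprime (fun z => ~ P z) 1 P1 coprimeP.
  move=> F FP [A0 FA0] Ftot.
  have primeF A : F A -> prime_ideal (fun z => ~ A z) by case/FP => [[]].
  have notin1 A : F A -> A 1 by move=> FA; apply: (proj2 (FP A FA)).
  split; last by move=> z zF; apply: (proj2 (proj1 (FP A0 FA0))) => A0z; apply: zF; exists A0.
  split; [split | split].
  - by move=> [A FA Az]; case: (primeF A FA) => [[/(_ Az)]].
  - split.
      move=> a b aF bF [A FA Aab]; case: (primeF A FA) => [[_ [AD _]] _].
      by apply: (AD a b) => [Aa|Ab|//]; [apply: aF | apply: bF]; exists A.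
    move=> r a aF [A FA Ara]; case: (primeF A FA) => [[_ [_ AM]] _].
    by apply: (AM r a) => // Aa; apply: aF; exists A.
  - by apply; exists A0 => //; apply: notin1.
  - move=> a b /= abF; apply: NNPP => /not_or_and [/NNPP [A FA Aa] /NNPP [B FB Bb]].
    wlog AB : A B a b Aa Bb FA FB abF / incl A B.
      move=> wlogAB; case: (Ftot A B FA FB) => [AB | BA]; first exact: (wlogAB A B a b).
      by apply: (wlogAB B A b a) => //; rewrite mulrC.
    case: (primeF B FB) => [_ [_ BM]].
    by case: (BM a b) => [Bab | /(_ (AB a Aa)) | /(_ Bb)] //; apply: abF; exists B.
exists (fun z => ~ A z); split=> //; split=> // Q primeQ QA z Az; apply: NNPP => Qz.
suff Az' : A z by [].
apply: (Amax (fun w => ~ Q w)) Qz; last by move=> w Aw /QA.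
split; last by move=> w /NNPP /QA; exact: AP.
suff -> : (fun w => ~ ~ Q w) = Q by [].
by apply: same_eq => w; split=> [/NNPP | Qw []].
Qed.


Lemma loc_memMl P A r z : is_ideal A -> loc_mem P A z -> loc_mem P A (r * z).
Proof. by move=> idA [s Ps Asz]; exists s => //; rewrite mulrCA; apply: idealMl. Qed.

Lemma loc_zero_mem P A z : is_ideal A -> loc_zero P z -> loc_mem P A z.
Proof. by move=> idA [s Ps sz0]; exists s => //; rewrite sz0; exact: ideal0. Qed.

Lemma local_global A w : is_ideal A ->
  (forall m, maximal_ideal m -> loc_mem m A w) -> A w.
Proof.
move=> idA Aloc; pose L r := A (r * w).
have idL : is_ideal L.
  split; first by rewrite /L mul0r; exact: ideal0.
  split; first by move=> a b La Lb; rewrite /L mulrDl; exact: idealD.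
  by move=> r a La; rewrite /L -mulrA; exact: idealMl.
case: (classic (L 1)) => [|L1]; first by rewrite /L mul1r.
have [m [maxm Lm]] := exists_maximal_above idL L1.
by have [s ms /Lm] := Aloc m maxm.
Qed.

Lemma minimal_prime_loc_nilpotent m z : minimal_prime m -> m z ->
  exists E, loc_mem m (fun r => r = 0) (z ^+ E).
Proof.
move=> [primem mmin] mz; apply: NNPP => notnil.
pose S w := exists s k, ~ m s /\ w = s * z ^+ k.
have [|||P [primeP _ PS]] := @exists_prime_avoiding (fun w => w = 0) S (zero_ideal R).
- by move=> w -> [s [k [ms E]]]; apply: notnil; exists k, s.
- by exists 1, 0%N; split; [case: primem => _ [] | rewrite expr0 mulr1].
- move=> a b [s [k [ms ->]]] [s' [k' [ms' ->]]]; exists (s * s'), (k + k')%N.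
  by split; [exact: prime_notinM | rewrite exprD; ring].
have Pm : incl P m.
  by move=> w Pw; apply: NNPP => mw; apply: (PS w Pw); exists w, 0%N; rewrite expr0 mulr1.
apply: (PS z (mmin P primeP Pm z mz)); exists 1, 1%N.
by rewrite expr1 mul1r; split=> //; case: primem => _ [].
Qed.

Definition nilradical : R -> Prop := fun z => forall P, minimal_prime P -> P z.

Lemma nilradical_ideal : is_ideal nilradical.
Proof.
have idP P : minimal_prime P -> is_ideal P by case=> [[]].
split; first by move=> P /idP; exact: ideal0.
split; first by move=> a b Na Nb P minP; apply: (idealD (idP P minP)); [apply: Na | apply: Nb].
by move=> r a Na P minP; apply: (idealMl (idP P minP)); apply: Na.
Qed.

End Primes.

Arguments nilradical {R}.

Notation ispan := (@span _ (GRing.regular _)).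

Section IdealProduct.
Variable R : comPzRingType.
Implicit Types (I J X : R -> Prop).

Lemma ideal_mul_ideal X J : is_ideal X -> is_ideal (ideal_mul X J).
Proof.
move=> idX; split; first by exists [::]; rewrite big_nil.
split.
  move=> a b [s [Xs ->]] [t [Xt ->]]; exists (s ++ t); rewrite big_cat; split => // p.
  by rewrite mem_cat => /orP [/Xs | /Xt].
move=> r a [s [Xs ->]]; exists [seq (r * p.1, p.2) | p <- s]; split.
  by move=> p /mapP [q /Xs [Xq Jq] ->]; split => //; apply: idealMl.
by rewrite big_map mulr_sumr; apply: eq_bigr => p _ /=; rewrite mulrA.
Qed.

Lemma ideal_mulM X J a b : X a -> J b -> ideal_mul X J (a * b).
Proof.
move=> Xa Jb; exists [:: (a, b)]; rewrite big_seq1; split => // p.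
by rewrite mem_seq1 => /eqP ->.
Qed.

Lemma ideal_mul_ind X J (Pr : R -> Prop) : Pr 0 ->
  (forall x y z, X x -> J y -> Pr z -> Pr (x * y + z)) ->
  forall z, ideal_mul X J z -> Pr z.
Proof.
move=> Pr0 PrS z [s [XJs ->]]; elim: s XJs => [|[x y] s IH] XJs; first by rewrite big_nil.
have [Xx Jy] := XJs (x, y) (mem_head _ _).
by rewrite big_cons; apply: PrS => //; apply: IH => p ps; apply: XJs; rewrite inE ps orbT.
Qed.

Lemma ispan1 (a z : R) : ispan [:: a] z <-> princ a z.
Proof.
split; first by move=> [r /= /eqP]; rewrite subr_eq0 => /eqP ->; exists r.
by move=> [r ->]; exists r; rewrite /= subrr.
Qed.

End IdealProduct.

Section ArithmeticalPrimes.
Variable R : comPzRingType.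
Hypothesis arith : arithmetical R.
Implicit Types (A B J P Q m : R -> Prop).

Lemma minimal_prime_below_unique m P Q : is_ideal m -> ~ m 1 ->
  minimal_prime P -> minimal_prime Q -> incl P m -> incl Q m -> P = Q.
Proof.
move=> idm m1 [primeP Pmin] [primeQ Qmin] Pm Qm; apply: same_eq.
case: (classic (incl P Q)) => [PQ | notPQ].
  by move=> z; split; [apply: PQ | apply: (Qmin P)].
case: (classic (incl Q P)) => [QP | notQP].
  by move=> z; split; [apply: (Pmin Q) | apply: QP].
have [a PQa] := not_all_ex_not _ _ notPQ; have [Pa Qa] := imply_to_and _ _ PQa.
have [b QPb] := not_all_ex_not _ _ notQP; have [Qb Pb] := imply_to_and _ _ QPb.
have [p [[u Hu] [v Hv]]] := arith a b.
have [idP [_ Pprime]] := primeP; have [idQ [_ Qprime]] := primeQ.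
have Pp : P p.
  have : P (p * b) by rewrite Hu; exact: idealMl.
  by case/Pprime => // /Pb.
have Qp : Q (1 - p).
  have : Q ((1 - p) * a) by rewrite Hv; exact: idealMl.
  by case/Qprime => // /Qa.
by case: m1; rewrite -(subrKC p 1); apply: idealD => //; [apply: Pm | apply: Qm].
Qed.

Definition fg_modulo J A := exists l : seq R, (forall x, x \in l -> J x) /\
  forall z, J z -> exists2 w, ispan l w & A (z - w).

Lemma fg_modulo_sub J A B : incl A B -> fg_modulo J A -> fg_modulo J B.
Proof.
move=> AB [l [Jl lJ]]; exists l; split => // z /lJ [w lw Azw].
by exists w => //; apply: AB.
Qed.

(* Chinese remainder: if z = w1 mod A, z = w2 mod B, p (z - w2) is in (w2 - w1) and
   (1 - p) (w2 - w1) in (z - w2), then w1 + p (z - w1) is in the span and = z mod A, B. *)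
Lemma fg_modulo_cap J A B : is_ideal A -> is_ideal B ->
  fg_modulo J A -> fg_modulo J B -> fg_modulo J (fun z => A z /\ B z).
Proof.
move=> idA idB [l1 [Jl1 l1J]] [l2 [Jl2 l2J]]; exists (l1 ++ l2); split.
  by move=> x; rewrite mem_cat => /orP [/Jl1 | /Jl2].
have idl := @span_submod _ R^o (l1 ++ l2).
move=> z Jz; have [w1 lw1 Aw1] := l1J z Jz; have [w2 lw2 Bw2] := l2J z Jz.
have [p [[u Hu] [v Hv]]] := arith (w2 - w1) (z - w2).
exists (w1 + p * (z - w1)).
  apply: (idealD idl); first exact: span_catl.
  have -> : p * (z - w1) = p * (w2 - w1) + p * (z - w2) by ring.
  rewrite Hu; apply: (idealD idl); apply: (idealMl idl); apply: (idealB idl).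
  - exact: span_catr.
  - exact: span_catl.
  - exact: span_catr.
  - exact: span_catl.
have -> : z - (w1 + p * (z - w1)) = (1 - p) * (z - w1) by ring.
split; first exact: idealMl.
have -> : (1 - p) * (z - w1) = (1 - p) * (w2 - w1) + (1 - p) * (z - w2) by ring.
by rewrite Hv; apply: (idealD idB); apply: idealMl.
Qed.

End ArithmeticalPrimes.

Section MultiplicationRing.
Variable R : comPzRingType.
Hypothesis MR : multiplication_ring R.
Implicit Types (I J X P Q m : R -> Prop).

Lemma mult_ring_arithmetical : arithmetical R.
Proof.
move=> a b; pose I z := exists u v, z = u * a + v * b.
have idI : is_ideal I.
  split; first by exists 0, 0; rewrite !mul0r addr0.
  split; first by move=> x y [u [v ->]] [u' [v' ->]]; exists (u + u'), (v + v'); ring.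
  by move=> r x [u [v ->]]; exists (r * u), (r * v); ring.
have aI : incl (princ a) I by move=> z [u ->]; exists u, 0; rewrite mul0r addr0.
have [X [idX aXI]] := MR idI (princ_ideal a) aI.
have [c [d [Xc Ea]]] : exists c d, X c /\ a = c * a + d * b.
  apply: (ideal_mul_ind (X := X) (J := I) (Pr := fun z => exists c d, X c /\ z = c * a + d * b)).
  - by exists 0, 0; split; [exact: ideal0 | rewrite !mul0r addr0].
  - move=> x y z Xx [u [v ->]] [c [d [Xc ->]]]; exists (x * u + c), (x * v + d).
    by split; [apply: (idealD idX) => //; exact: idealMr | ring].
  - by apply/aXI; exact: princ_self.
exists c; split; first by apply/aXI; apply: ideal_mulM => //; exists 0, 1; ring.
by exists d; rewrite mulrBl mul1r {1}Ea; ring.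
Qed.

Let arith := mult_ring_arithmetical.

Lemma ideal_mul_loc_single X m : is_ideal X -> prime_ideal m ->
  forall x, ideal_mul X m x -> exists w s c, [/\ X w, ~ m s, m c & s * x = w * c].
Proof.
move=> idX primem; have [idm [m1 _]] := primem.
apply: ideal_mul_ind.
  by exists 0, 1, 0; split => //; [exact: ideal0 | exact: ideal0 | rewrite !mulr0].
move=> x' y z Xx' my [w [s [c [Xw ms mc Ez]]]].
have [p [[e He] [e' He']]] := arith w x'.
case: (classic (m p)) => [mp | nmp].
  exists x', (s * (1 - p)), (s * (1 - p) * y + e' * c); split => //.
  - exact: prime_notinM (ideal_notin1B idm m1 mp).
  - by apply: idealD => //; apply: idealMl.
  - have -> : s * (1 - p) * (x' * y + z) = s * (1 - p) * x' * y + (1 - p) * (s * z).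
      by ring.
    by rewrite Ez mulrA He'; ring.
exists w, (s * p), (s * e * y + p * c); split => //.
- exact: prime_notinM.
- by apply: idealD => //; apply: idealMl.
- have -> : s * p * (x' * y + z) = s * (p * x') * y + p * (s * z) by ring.
  by rewrite He Ez; ring.
Qed.

Lemma loc_zero_of_prime_below Q m q : prime_ideal Q -> prime_ideal m ->
  incl Q m -> ~ incl m Q -> Q q -> loc_zero m q.
Proof.
move=> primeQ primem Qm mQ Qq.
have [y mQy] := not_all_ex_not _ _ mQ; have [my Qy] := imply_to_and _ _ mQy.
have [idQ [_ Qprime]] := primeQ; have [idm [m1 _]] := primem.
have divides_y q' : Q q' -> exists s r, [/\ ~ m s, Q r & s * q' = r * y].
  move=> Qq'; have [p [[u Hu] [v Hv]]] := arith q' y.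
  have mp : m p.
    apply: NNPP => nmp; have : Q (p * y) by rewrite Hu; apply: idealMl.
    by case/Qprime => // /Qm.
  exists (1 - p), v; split => //; first exact: ideal_notin1B.
  have : Q (v * y) by rewrite -Hv; apply: idealMl.
  by case/Qprime => // /Qy.
have qQ : incl (princ q) Q by move=> z [r ->]; apply: idealMl.
have [X [idX qXQ]] := MR idQ (princ_ideal q) qQ.
have idXQ := ideal_mul_ideal Q idX.
have XQ_y : forall z, ideal_mul X Q z -> exists s c, [/\ ~ m s, ideal_mul X Q c & s * z = y * c].
  apply: ideal_mul_ind.
    by exists 1, 0; split; [exact: m1 | exact: ideal0 | rewrite !mulr0].
  move=> x q' z Xx Qq' [s [c [ms XQc Ez]]]; have [s' [r [ms' Qr Eq']]] := divides_y q' Qq'.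
  exists (s' * s), (s * (x * r) + s' * c); split.
  - exact: prime_notinM.
  - apply: (idealD idXQ); last exact: (idealMl idXQ).
    by apply: (idealMl idXQ); apply: ideal_mulM.
  - have -> : s' * s * (x * q' + z) = s * x * (s' * q') + s' * (s * z) by ring.
    by rewrite Eq' Ez; ring.
have [s [c [ms XQc Esc]]] := XQ_y q (proj1 (qXQ q) (princ_self q)).
have [d Ed] := proj2 (qXQ c) XQc.
exists (s - y * d).
  by move=> msyd; apply: ms; rewrite -(subrK (y * d) s); apply: idealD => //; apply: idealMr.
by rewrite mulrBl Esc Ed; ring.
Qed.

Lemma loc_principal_maximal m : maximal_ideal m ->
  exists2 t, m t & forall z, m z -> loc_mem m (princ t) z.
Proof.
move=> maxm; have primem := maximal_prime maxm; have [idm [m1 _]] := primem.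
case: (classic (forall x, m x -> loc_zero m x)) => [mnil | notnil].
  by exists 0 => [|z /mnil [s ms sz0]]; [exact: ideal0 | exists s => //; exists 0; rewrite mul0r].
have [x nil_x] := not_all_ex_not _ _ notnil; have [mx xnil] := imply_to_and _ _ nil_x.
have xm : incl (princ x) m by move=> z [r ->]; apply: idealMl.
have [X [idX xXm]] := MR idm (princ_ideal x) xm.
case: (classic (exists2 s, X s & ~ m s)) => [[s Xs ms] | Xm].
  by exists x => // z mz; exists s => //; apply/xXm; apply: ideal_mulM.
have [w [s [c [Xw ms mc Esx]]]] :=
  ideal_mul_loc_single idX primem (proj1 (xXm x) (princ_self x)).
exists c => // z mz; have [d Ed] : princ x (w * z) by apply/xXm; apply: ideal_mulM.
pose e := s * z - d * c.
have we : w * e = 0.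
  have -> : w * e = s * (w * z) - d * (w * c) by rewrite /e; ring.
  by rewrite Ed -Esx; ring.
have [p [[g Eg] [h Eh]]] := arith e c.
case: (classic (m p)) => [mp | nmp].
  exists ((1 - p) * s); first exact: prime_notinM (ideal_notin1B idm m1 mp) ms.
  exists (h + (1 - p) * d).
  have -> : (1 - p) * s * z = (1 - p) * e + (1 - p) * d * c by rewrite /e; ring.
  by rewrite Eh; ring.
exfalso; apply: xnil; exists (p * s); first exact: prime_notinM.
by rewrite -mulrA Esx mulrCA Eg mulrCA we mulr0.
Qed.

Lemma nat_threshold (P : nat -> Prop) E : P 0%N -> ~ P E ->
  exists k, [/\ (k < E)%N, P k & ~ P k.+1].
Proof.
elim: E => [|E IH] P0 PE; first by [].
case: (classic (P E)) => [PE' | nPE]; first by exists E.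
by have [k [kE Pk nPk]] := IH P0 nPE; exists k; split => //; exact: ltnW.
Qed.

Lemma loc_principal m J : maximal_ideal m -> minimal_prime m -> is_ideal J -> incl J m ->
  exists2 a, J a & forall j, J j -> loc_mem m (princ a) j.
Proof.
move=> maxm minm idJ Jm; have primem := maximal_prime maxm; have [idm [m1 _]] := primem.
have [t mt tgen] := loc_principal_maximal maxm.
have [E [s0 ms0 Es0]] := minimal_prime_loc_nilpotent minm mt.
pose P k := forall j, J j -> loc_mem m (princ (t ^+ k)) j.
have P0 : P 0%N by move=> j _; exists 1 => //; exists j; rewrite expr0 mulr1 mul1r.
case: (classic (P E)) => [PE | nPE].
  exists 0 => [|j /PE [s ms [r Er]]]; first exact: ideal0.
  exists (s0 * s); first exact: prime_notinM.
  by exists 0; rewrite mul0r -mulrA Er mulrCA Es0 mulr0.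
have [k [_ Pk nPk1]] := nat_threshold P0 nPE.
have [j0 nj0] := not_all_ex_not _ _ nPk1; have [Jj0 notlin] := imply_to_and _ _ nj0.
have [s1 ms1 [r1 Er1]] := Pk j0 Jj0.
have mr1 : ~ m r1.
  move=> mr1; apply: notlin; have [s' ms' [r' Er']] := tgen r1 mr1.
  exists (s' * s1); first exact: prime_notinM.
  by exists r'; rewrite -mulrA Er1 mulrA Er' exprSr; ring.
exists j0 => // j Jj; have [s ms [r Er]] := Pk j Jj.
exists (r1 * s); first exact: prime_notinM.
by exists (r * s1); rewrite -mulrA Er mulrCA -Er1 mulrA.
Qed.

Lemma fg_modulo_prime P J : prime_ideal P -> is_ideal J -> fg_modulo J P.
Proof.
move=> primeP idJ; have [idP [_ Pprime]] := primeP.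
case: (classic (incl J P)) => [JP | notJP].
  by exists [::]; split => // z Jz; exists 0 => //; rewrite subr0; apply: JP.
have [a nJPa] := not_all_ex_not _ _ notJP; have [Ja Pa] := imply_to_and _ _ nJPa.
pose I z := exists j p, [/\ J j, P p & z = j + p].
pose aP z := exists r p, P p /\ z = r * a + p.
have idI : is_ideal I.
  split; first by exists 0, 0; split; [exact: ideal0 | exact: ideal0 | rewrite addr0].
  split.
    move=> u v [j [p [Jj Pp ->]]] [j' [p' [Jj' Pp' ->]]]; exists (j + j'), (p + p').
    by split; [exact: idealD | exact: idealD | ring].
  move=> r u [j [p [Jj Pp ->]]]; exists (r * j), (r * p).
  by split; [exact: idealMl | exact: idealMl | ring].
have idaP : is_ideal aP.
  split; first by exists 0, 0; split; [exact: ideal0 | rewrite mul0r addr0].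
  split.
    move=> u v [r [p [Pp ->]]] [r' [p' [Pp' ->]]]; exists (r + r'), (p + p').
    by split; [exact: idealD | ring].
  move=> c u [r [p [Pp ->]]]; exists (c * r), (c * p).
  by split; [exact: idealMl | ring].
have aPI : incl aP I.
  by move=> u [r [p [Pp ->]]]; exists (r * a), p; split => //; apply: idealMl.
have [X [idX aPXI]] := MR idI idaP aPI.
(* As (a) + P = X (J + P), z x is in (a) + P for x in X, so z y = a w mod P for y in
   X (J + P) and some w spanned by the J-parts of y; take y = a and cancel a. *)
have gen : forall y, ideal_mul X I y -> exists l : seq R, (forall x, x \in l -> J x) /\
    forall z, J z -> exists2 w, ispan l w & P (z * y - a * w).
  apply: ideal_mul_ind.
    by exists [::]; split => // z _; exists 0 => //; rewrite !mulr0 subr0; exact: ideal0.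
  move=> x y u Xx [j [p [Jj Pp ->]]] [l [Jl lP]]; exists (j :: l); split.
    by move=> v; rewrite inE => /orP [/eqP -> | /Jl].
  move=> z Jz; have [w lw Pw] := lP z Jz.
  have [c [p' [Pp' Ec]]] : aP (z * x).
    apply/aPXI; rewrite mulrC; apply: ideal_mulM => //.
    by exists z, 0; split => //; [exact: ideal0 | rewrite addr0].
  exists (c * j + w); first by exists c; rewrite /= addrC addKr.
  have -> : z * (x * (j + p) + u) - a * (c * j + w) =
    (z * x) * (j + p) - a * c * j + (z * u - a * w) by ring.
  rewrite Ec; have -> : (c * a + p') * (j + p) - a * c * j = c * a * p + p' * (j + p) by ring.
  by apply: idealD => //; apply: idealD => //; [exact: idealMl | exact: idealMr].
have [l [Jl lP]] : exists l : seq R, (forall x, x \in l -> J x) /\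
    forall z, J z -> exists2 w, ispan l w & P (z * a - a * w).
  by apply: gen; apply/aPXI; exists 1, 0; split; [exact: ideal0 | rewrite mul1r addr0].
exists l; split => // z Jz; have [w lw Pw] := lP z Jz; exists w => //.
have : P (a * (z - w)) by rewrite mulrBr [a * z]mulrC.
by case/Pprime => // /Pa.
Qed.

Lemma maximal_above_or_loc_zero Q0 x E m :
  (forall P, minimal_prime P -> P <> Q0 -> P x) ->
  (forall P, minimal_prime P -> P x -> loc_zero P (x ^+ E)) ->
  maximal_ideal m -> incl Q0 m \/ loc_zero m (x ^+ E.+1).
Proof.
move=> xother xnil maxm; have primem := maximal_prime maxm.
have [P [minP Pm]] := exists_minimal_prime_below primem.
case: (classic (P = Q0)) => [<- | PQ0]; [by left | right].
have Px := xother P minP PQ0.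
case: (classic (incl m P)) => [mP | mP].
  have -> : m = P by apply: same_eq => z; split; [apply: mP | apply: Pm].
  by rewrite exprS; apply: (loc_memMl _ (zero_ideal R)); apply: xnil.
rewrite exprSr; apply: (loc_memMl _ (zero_ideal R)).
exact: loc_zero_of_prime_below (proj1 minP) primem Pm mP Px.
Qed.

End MultiplicationRing.

Lemma exists_common_bound (n : nat) (P : nat -> nat -> Prop) :
  (forall i E E', (E <= E')%N -> P i E -> P i E') ->
  (forall i, (i < n)%N -> exists E, P i E) -> exists E, forall i, (i < n)%N -> P i E.
Proof.
move=> mono; elim: n => [|n IH] bounded; first by exists 0%N.
have [E HE] := IH (fun i ilt => bounded i (leqW ilt)).
have [E' HE'] := bounded n (ltnSn n).
exists (maxn E E') => i; rewrite ltnS leq_eqVlt => /orP [/eqP -> | ilt].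
  by apply: (mono n E'); rewrite ?leq_maxr.
by apply: (mono i E); rewrite ?leq_maxl //; apply: HE.
Qed.

Section FinitelyManyMinimalPrimes.
Variable R : comPzRingType.
Hypothesis MR : multiplication_ring R.
Variables (n : nat) (Q : nat -> R -> Prop).
Hypothesis minQ : forall P, minimal_prime P -> exists2 i, (i < n)%N & same P (Q i).
Implicit Types (J P m : R -> Prop).

Let arith := mult_ring_arithmetical MR.

Lemma fg_modulo_nilradical J : is_ideal J -> fg_modulo J nilradical.
Proof.
move=> idJ; pose below k z := forall i, (i < k)%N -> minimal_prime (Q i) -> Q i z.
suff /(_ n) : forall k, fg_modulo J (below k).
  apply: fg_modulo_sub => z Qz P minP; have [i ilt /same_eq EP] := minQ minP.
  by rewrite EP in minP *; apply: Qz.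
have below_succ k : incl (below k) (fun z => minimal_prime (Q k) -> Q k z) ->
    incl (below k) (below k.+1).
  move=> Qk z Qz i; rewrite ltnS leq_eqVlt => /orP [/eqP -> | /Qz //].
  exact: Qk.
elim=> [|k IH]; first by exists [::]; split=> // z _; exists 0.
case: (classic (minimal_prime (Q k))) => [minQk | nminQk]; last first.
  by apply: fg_modulo_sub IH; apply: below_succ => z _ /nminQk.
have idbelow : is_ideal (below k).
  split; first by move=> i _ [[[Qi0 _] _] _].
  split.
    move=> a b Qa Qb i ilt minQi.
    by apply: (idealD (proj1 (proj1 minQi))); [apply: Qa | apply: Qb].
  by move=> r a Qa i ilt minQi; apply: (idealMl (proj1 (proj1 minQi))); apply: Qa.
have := fg_modulo_cap arith idbelow (proj1 (proj1 minQk)) IH (fg_modulo_prime MR (proj1 minQk) idJ).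
apply: fg_modulo_sub => z [Qz Qkz] i; rewrite ltnS leq_eqVlt => /orP [/eqP -> // | /Qz //].
Qed.

Lemma exists_outside_other_minimal m Q0 : prime_ideal m -> minimal_prime Q0 -> incl Q0 m ->
  exists2 x, ~ m x & forall P, minimal_prime P -> P <> Q0 -> P x.
Proof.
move=> primem minQ0 Q0m; have [idm [m1 _]] := primem.
suff /(_ n) [x mx Qx] : forall k, exists2 x, ~ m x &
    forall i, (i < k)%N -> minimal_prime (Q i) -> Q i <> Q0 -> Q i x.
  exists x => // P minP PQ0; have [i ilt /same_eq EP] := minQ minP.
  by rewrite EP in minP PQ0 *; apply: Qx.
elim=> [|k [x mx Qx]]; first by exists 1.
case: (classic (minimal_prime (Q k) /\ Q k <> Q0)) => [[minQk Qk0] | notk]; last first.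
  exists x => // i; rewrite ltnS leq_eqVlt => /orP [/eqP -> minQk Qk0 | /Qx //].
  by case: notk.
have [xk Qkxk mxk] : exists2 xk, Q k xk & ~ m xk.
  apply: NNPP => Qkm; apply: Qk0.
  apply: (minimal_prime_below_unique arith idm m1 minQk minQ0 _ Q0m) => z Qkz.
  by apply: NNPP => mz; apply: Qkm; exists z.
exists (x * xk); first exact: prime_notinM.
move=> i; rewrite ltnS leq_eqVlt => /orP [/eqP -> _ _ | ilt minQi Qi0].
  by apply: (idealMl (proj1 (proj1 minQk))).
by apply: (idealMr (proj1 (proj1 minQi))); apply: Qx.
Qed.

Lemma uniform_loc_nilpotent x :
  exists E, forall P, minimal_prime P -> P x -> loc_zero P (x ^+ E).
Proof.
have [||E HE] := @exists_common_bound n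
    (fun i E => minimal_prime (Q i) -> Q i x -> loc_zero (Q i) (x ^+ E)).
- move=> i E E' EE' HE minQi Qix; rewrite -(subnK EE') exprD.
  by apply: (loc_memMl _ (zero_ideal R)); apply: HE.
- move=> i _; case: (classic (minimal_prime (Q i) /\ Q i x)) => [[minQi Qix] | notQi].
    by have [E HE] := minimal_prime_loc_nilpotent minQi Qix; exists E.
  by exists 0%N => minQi Qix; case: notQi.
- exists E => P minP Px; have [i ilt /same_eq EP] := minQ minP.
  by rewrite EP in minP Px *; apply: HE.
Qed.

Definition fg_scaled J (r : R) := exists l : seq R, (forall x, x \in l -> J x) /\
  forall z, J z -> ispan l (r * z).

Lemma fg_scaled_ideal J : is_ideal (fg_scaled J).
Proof.
split; first by exists [::]; split=> // z _; rewrite mul0r.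
split.
  move=> a b [l1 [Jl1 l1J]] [l2 [Jl2 l2J]]; exists (l1 ++ l2); split.
    by move=> x; rewrite mem_cat => /orP [/Jl1 | /Jl2].
  move=> z Jz; rewrite mulrDl; apply: (idealD (@span_submod _ R^o _)).
    by apply: span_catl; apply: l1J.
  by apply: span_catr; apply: l2J.
move=> r a [l [Jl lJ]]; exists l; split=> // z Jz; rewrite -mulrA.
by apply: (idealMl (@span_submod _ R^o _)); apply: lJ.
Qed.

Lemma fg_scaled_loc J m : is_ideal J -> incl J nilradical -> maximal_ideal m ->
  exists2 y, ~ m y & fg_scaled J y.
Proof.
move=> idJ Jnil maxm; have primem := maximal_prime maxm; have [idm [m1 _]] := primem.
have [Q0 [minQ0 Q0m]] := exists_minimal_prime_below primem.
have [x mx xother] := exists_outside_other_minimal primem minQ0 Q0m.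
have [E xnil] := uniform_loc_nilpotent x.
have JQ0 : incl J Q0 by move=> z /Jnil; apply.
exists (x ^+ E.+1); first exact: prime_notinX.
case: (classic (incl m Q0)) => [mQ0 | mQ0].
  have Em : m = Q0 by apply: same_eq => z; split; [apply: mQ0 | apply: Q0m].
  have minm : minimal_prime m by rewrite Em.
  have Jm : incl J m by move=> z /JQ0 /Q0m.
  have [a Ja aloc] := loc_principal MR maxm minm idJ Jm.
  exists [:: a]; split; first by move=> v; rewrite mem_seq1 => /eqP ->.
  move=> z Jz; apply/ispan1; apply: (local_global (princ_ideal a)) => m' maxm'.
  case: (maximal_above_or_loc_zero MR xother xnil maxm') => [Q0m' | y0nil].
    have [idm' m'1 _] := maxm'; have mm' : incl m m' by rewrite Em.
    have -> : m' = m.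
      by apply: same_eq => w; split => [|/mm' //]; apply: (maximal_max maxm).
    by apply: (loc_memMl _ (princ_ideal a)); apply: aloc.
  rewrite mulrC; apply: (loc_memMl _ (princ_ideal a)).
  exact: loc_zero_mem (princ_ideal a) y0nil.
exists [::]; split=> // z Jz; apply: (local_global (zero_ideal R)) => m' maxm'.
case: (maximal_above_or_loc_zero MR xother xnil maxm') => [Q0m' | y0nil]; last first.
  by rewrite mulrC; apply: (loc_memMl _ (zero_ideal R)).
apply: (loc_memMl _ (zero_ideal R)).
apply: (loc_zero_of_prime_below MR (proj1 minQ0) (maximal_prime maxm') Q0m' _ (JQ0 z Jz)).
move=> m'Q0; apply: mQ0 => w mw; apply: (m'Q0).
have m'm : incl m' m by move=> v /m'Q0 /Q0m.
exact: (maximal_max maxm' idm m1 m'm).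
Qed.

Lemma fg_ideal_in_nilradical J : is_ideal J -> incl J nilradical ->
  exists l : seq R, (forall x, x \in l -> J x) /\ incl J (ispan l).
Proof.
move=> idJ Jnil; have [l [Jl lJ]] : fg_scaled J 1.
  apply: (local_global (fg_scaled_ideal J)) => m maxm.
  by have [y my Jy] := fg_scaled_loc idJ Jnil maxm; exists y; rewrite ?mulr1.
by exists l; split=> // z /lJ; rewrite mul1r.
Qed.

Lemma fg_ideal J : is_ideal J ->
  exists l : seq R, (forall x, x \in l -> J x) /\ incl J (ispan l).
Proof.
move=> idJ; have [l1 [Jl1 l1J]] := fg_modulo_nilradical idJ.
pose Jnil z := J z /\ nilradical z.
have idJnil : is_ideal Jnil.
  have [N0 [ND NM]] := @nilradical_ideal R.
  split; first by split; [exact: ideal0 | exact: N0].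
  split; first by move=> a b [Ja Na] [Jb Nb]; split; [exact: idealD | exact: ND].
  by move=> r a [Ja Na]; split; [exact: idealMl | exact: NM].
have [l2 [Jl2 l2J]] := fg_ideal_in_nilradical idJnil (fun z => @proj2 _ _).
exists (l1 ++ l2); split.
  by move=> x; rewrite mem_cat => /orP [/Jl1 | /Jl2 []].
have idl := @span_submod _ R^o (l1 ++ l2).
move=> z Jz; have [w l1w Nzw] := l1J z Jz; rewrite -(subrKC w z).
apply: (idealD idl); first exact: span_catl.
apply: span_catr; apply: l2J; split=> //; apply: (idealB idJ) => //.
exact: (@span_min _ R^o J l1 idJ Jl1 w l1w).
Qed.

Lemma mult_ring_noetherian : noetherian_mod R^o.
Proof. by apply: fg_noetherian => J; exact: fg_ideal. Qed.

End FinitelyManyMinimalPrimes.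

Theorem theorem1p5 (R : comPzRingType) (M : lmodType R) :
  multiplication_ring R -> finitely_many_minimal_primes R ->
  ((faithful_mod M /\ noetherian_mod M /\ distributive_mod M) <->
   (faithful_mod M /\ multiplication_module M)).
Proof.
move=> MR [n [Q minQ]]; split.
  move=> [faithM [noethM distrM]]; split=> //.
  exact: fg_colon_comaximal_mult (distributive_colon_comaximal distrM) (noetherian_fg noethM).
move=> [faithM multM]; split=> //; split.
  exact: mult_noetherian (mult_ring_noetherian MR minQ) multM.
exact/colon_comaximal_distributive/mult_colon_comaximal/multM/mult_ring_arithmetical.
Qed.
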